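(* Let $a>0$ and $t>0$, and let $x_{\rm L}(1,t,a)\le x_{\rm R}(1,t,a)$ be the middle and largest of the three real roots of the cubic $x\{4ax^2-(8a^2+20at-t^2)x+4(a-t)^3\}$ (the left and right edges of the support of the three-parametric MP density with $r=1$). (i) If $0<t<a$, then \[ x_{\rm L}(1,t,a)=\frac{1}{8a}\{8a^2+20at-t^2-\sqrt t\,(8a+t)^{3/2}\},\qquad x_{\rm R}(1,t,a)=\frac{1}{8a}\{8a^2+20at-t^2+\sqrt t\,(8a+t)^{3/2}\}, \] and $0<x_{\rm L}(1,t,a)<x_{\rm R}(1,t,a)$. (ii) If $t\ge a$, then $x_{\rm L}(1,t,a)=0$ and \[ x_{\rm R}(1,t,a)=\frac{1}{8a}\{8a^2+20at-t^2+\sqrt t\,(8a+t)^{3/2}\}>0. \]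
   Context: For $r=1$ the cubic $S(x;r,t,a)=4ax^3-\{8a^2+4a(3r+2)t-t^2\}x^2+2[2a^3-2a^2(5r-2)t+a\{r(6r-1)+1\}t^2-(r+1)t^3]x+(r-1)^2t^2\{a^2-a(4r-2)t+t^2\}$ reduces to $x\{4ax^2-(8a^2+20at-t^2)x+4(a-t)^3\}$; the edges $x_{\rm L}(r,t,a)$, $x_{\rm R}(r,t,a)$ of the support are defined as the middle and largest real roots of $S(\cdot;r,t,a)$. *)

From Stdlib Require Import Reals.
Open Scope R_scope.

Definition S (x r t a : R) : R :=
  4*a*x^3
  - (8*a^2 + 4*a*(3*r+2)*t - t^2) * x^2
  + 2*(2*a^3 - 2*a^2*(5*r-2)*t + a*(r*(6*r-1)+1)*t^2 - (r+1)*t^3) * x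
  + (r-1)^2 * t^2 * (a^2 - a*(4*r-2)*t + t^2).

(* [edges r t a xL xR]: S(.;r,t,a) (leading coefficient 4a) has three real
   roots x1 <= xL <= xR (counted with multiplicity), i.e. xL is the middle
   and xR the largest real root. *)
Definition edges (r t a xL xR : R) : Prop :=
  exists x1 : R, x1 <= xL /\ xL <= xR /\
    forall x : R, S x r t a = 4*a*(x - x1)*(x - xL)*(x - xR).

(* Put s = sqrt t and u = sqrt (8a + t), so that t = s^2 and a = (u^2 - s^2)/8.
   In these coordinates 8a^2 + 20at - t^2 -/+ s u^3 = (u -/+ 3s)^3 (u +/- s) / 8,
   so the nonzero roots of S(.;1,t,a) are (u - 3s)^3 / (8(u - s)) and
   (u + 3s)^3 / (8(u + s)).  The second is positive, while the sign of the first
   is that of u - 3s, i.e. of a - t; this decides whether 0 is the smallest or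
   the middle root.  Since the sorted roots of a factored cubic are unique,
   the edges are determined. *)

From Stdlib Require Import Reals Lra Psatz.
Open Scope R_scope.

Lemma factored_cubic_root (c z1 z2 z3 y : R) :
  c <> 0 -> c * (y - z1) * (y - z2) * (y - z3) = 0 ->
  y = z1 \/ y = z2 \/ y = z3.
Proof.
  intros hc h.
  destruct (Rmult_integral _ _ h) as [h12 | h3]; [| right; right; lra].
  destruct (Rmult_integral _ _ h12) as [h1 | h2]; [| right; left; lra].
  destruct (Rmult_integral _ _ h1) as [h0 | h1']; [contradiction | left; lra].
Qed.

Lemma cubic_root_sum (x1 x2 x3 y1 y2 y3 : R) :
  (forall x, (x - x1) * (x - x2) * (x - x3) = (x - y1) * (x - y2) * (x - y3)) ->
  x1 + x2 + x3 = y1 + y2 + y3.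
Proof.
  intros E.
  (* p(1) + p(-1) - 2 p(0) = -2 (sum of the roots) for a monic cubic p *)
  pose proof (E 0) as E0. pose proof (E 1) as E1. pose proof (E (-1)) as E2.
  nra.
Qed.

Lemma sorted_cubic_roots_unique (c x1 x2 x3 y1 y2 y3 : R) :
  c <> 0 -> x1 <= x2 <= x3 -> y1 <= y2 <= y3 ->
  (forall x, c * (x - x1) * (x - x2) * (x - x3) = c * (x - y1) * (x - y2) * (x - y3)) ->
  x1 = y1 /\ x2 = y2 /\ x3 = y3.
Proof.
  intros hc hx hy E.
  assert (Hy : forall y, y = y1 \/ y = y2 \/ y = y3 -> y = x1 \/ y = x2 \/ y = x3).
  { intros y hyi. apply (factored_cubic_root c); [exact hc |].
    rewrite E. destruct hyi as [-> | [-> | ->]]; ring. }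
  assert (Hx : forall x, x = x1 \/ x = x2 \/ x = x3 -> x = y1 \/ x = y2 \/ x = y3).
  { intros x hxi. apply (factored_cubic_root c); [exact hc |].
    rewrite <- E. destruct hxi as [-> | [-> | ->]]; ring. }
  assert (Hsum : x1 + x2 + x3 = y1 + y2 + y3).
  { apply cubic_root_sum. intro x. apply (Rmult_eq_reg_l c); [| exact hc].
    rewrite <- !Rmult_assoc. apply E. }
  pose proof (Hy y1 (or_introl eq_refl)).
  pose proof (Hy y3 (or_intror (or_intror eq_refl))).
  pose proof (Hx x1 (or_introl eq_refl)).
  pose proof (Hx x3 (or_intror (or_intror eq_refl))).
  assert (x1 = y1) by lra. assert (x3 = y3) by lra.
  repeat split; lra.
Qed.

Definition edge_lo (s u : R) : R := (u - 3*s)^3 / (8*(u - s)).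
Definition edge_hi (s u : R) : R := (u + 3*s)^3 / (8*(u + s)).

Lemma edge_hi_pos (s u : R) : 0 < s -> 0 < u -> 0 < edge_hi s u.
Proof.
  intros hs hu. unfold edge_hi. apply Rdiv_lt_0_compat; [apply pow_lt |]; lra.
Qed.

Section SupportEdges.

Variables a t s u : R.
Hypothesis ha : 0 < a.
Hypothesis hs : 0 < s.
Hypothesis hu : 0 < u.
Hypothesis hst : t = s^2.
Hypothesis hua : u^2 = 8*a + t.

Let a_eq : a = (u^2 - s^2) / 8.
Proof. lra. Qed.

Let s_lt_u : s < u.
Proof. nra. Qed.

Lemma S_r1_factor (x : R) :
  S x 1 t a = 4*a * (x - 0) * (x - edge_lo s u) * (x - edge_hi s u).
Proof.
  rewrite a_eq, hst. unfold S, edge_lo, edge_hi. field. lra.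
Qed.

Lemma edge_lo_closed_form :
  / (8*a) * (8*a^2 + 20*a*t - t^2 - s * u^3) = edge_lo s u.
Proof.
  rewrite a_eq, hst. unfold edge_lo. field. lra.
Qed.

Lemma edge_hi_closed_form :
  / (8*a) * (8*a^2 + 20*a*t - t^2 + s * u^3) = edge_hi s u.
Proof.
  rewrite a_eq, hst. unfold edge_hi. field. lra.
Qed.

Lemma edge_lo_lt_edge_hi : edge_lo s u < edge_hi s u.
Proof.
  rewrite <- edge_lo_closed_form, <- edge_hi_closed_form.
  apply Rmult_lt_compat_l; [apply Rinv_0_lt_compat; lra |].
  assert (0 < s * u^3) by (apply Rmult_lt_0_compat; [| apply pow_lt]; lra).
  lra.
Qed.

Lemma edge_lo_pos : t < a -> 0 < edge_lo s u.
Proof.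
  intro h. assert (3*s < u) by nra.
  unfold edge_lo. apply Rdiv_lt_0_compat; [apply pow_lt |]; lra.
Qed.

Lemma edge_lo_nonpos : a <= t -> edge_lo s u <= 0.
Proof.
  intro h. assert (u <= 3*s) by nra.
  assert (0 <= (3*s - u)^3) by (apply pow_le; lra).
  assert (0 < / (8*(u - s))) by (apply Rinv_0_lt_compat; lra).
  unfold edge_lo, Rdiv. nra.
Qed.

End SupportEdges.

Theorem lemma2p5 (a t : R) (ha : 0 < a) (ht : 0 < t) :
  (exists xL xR : R, edges 1 t a xL xR) /\
  (forall xL xR : R, edges 1 t a xL xR ->
    (t < a ->
       xL = / (8*a) * (8*a^2 + 20*a*t - t^2 - sqrt t * (sqrt (8*a + t))^3) /\
       xR = / (8*a) * (8*a^2 + 20*a*t - t^2 + sqrt t * (sqrt (8*a + t))^3) /\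
       0 < xL /\ xL < xR) /\
    (a <= t ->
       xL = 0 /\
       xR = / (8*a) * (8*a^2 + 20*a*t - t^2 + sqrt t * (sqrt (8*a + t))^3) /\
       0 < xR)).
Proof.
  set (s := sqrt t). set (u := sqrt (8*a + t)).
  assert (hs : 0 < s) by (apply sqrt_lt_R0; lra).
  assert (hu : 0 < u) by (apply sqrt_lt_R0; lra).
  assert (hst : t = s^2) by (unfold s; rewrite pow2_sqrt; lra).
  assert (hua : u^2 = 8*a + t) by (unfold u; rewrite pow2_sqrt; lra).
  rewrite (edge_lo_closed_form a t s u), (edge_hi_closed_form a t s u) by assumption.
  pose proof (S_r1_factor a t s u ha hs hu hst hua) as F.
  pose proof (edge_lo_lt_edge_hi a t s u ha hs hu hst hua) as Hlt.
  pose proof (edge_hi_pos s u hs hu) as Hhi.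
  pose proof (edge_lo_pos a t s u ha hs hu hst hua) as Hlo_pos.
  pose proof (edge_lo_nonpos a t s u ha hs hu hst hua) as Hlo_nonpos.
  split.
  - destruct (Rlt_or_le t a) as [h | h].
    + exists (edge_lo s u), (edge_hi s u), 0.
      specialize (Hlo_pos h). repeat split; [lra | lra | exact F].
    + exists 0, (edge_hi s u), (edge_lo s u).
      specialize (Hlo_nonpos h). repeat split; [lra | lra |].
      intro x. rewrite F. ring.
  - intros xL xR [x1 [h1 [h2 H]]]. split; intro h.
    + specialize (Hlo_pos h).
      destruct (sorted_cubic_roots_unique (4*a) 0 (edge_lo s u) (edge_hi s u) x1 xL xR)
        as [_ [<- <-]]; [lra | lra | lra | | repeat split; lra].
      intro x. rewrite <- F, H. reflexivity.
    + specialize (Hlo_nonpos h).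
      destruct (sorted_cubic_roots_unique (4*a) (edge_lo s u) 0 (edge_hi s u) x1 xL xR)
        as [_ [<- <-]]; [lra | lra | lra | | repeat split; lra].
      intro x. rewrite <- H, F. ring.
Qed.
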